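(* Let $G$ be a topological group, $\theta\in\mathrm{Aut}(G)$ an involution, $K:=G^\theta$, and let $(X,o)\supset (G/K,eK)$ be a pointed reflection space containing $G/K$. Let $\{g_i, i\in I\}$ be a generating system of the group $G$. Furthermore, let $T_i\in\mathrm{Trans}(X)|_{G/K}$, $i\in I$, be elements that act on $G/K$ via left multiplication with $g_i$: $T_i( hK)=(g_ih)K$ for all $i\in I$ and $h\in G$. Then the set $\{T_i, {}^{s_o}(T_i^{-1}) \}$ is a generating system of the group $\mathrm{Trans}(X)|_{G/K}$.
   Context: $G/K$ is a reflection space with reflection $(gK,hK)\mapsto \tau(g)\theta(h)K$, where $\tau(g)=g\theta(g)^{-1}$, and base point $o=eK$. A reflection space has continuous $(x,y)\mapsto x.y$ satisfying $x.x=x$, $x.(x.y)=y$, $x.(y.z)=(x.y).(x.z)$. For $x\in X$, $s_x:y\mapsto x.y$ is the elementary reflection, and $\mathrm{Trans}(X)|_{G/K}:=\langle s_{y}\circ s_o\mid y\in G/K\rangle\le\mathrm{Trans}(X)$ is the restricted group of transvections. ${}^hg$ denotes left conjugation $hgh^{-1}$. *)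

From HB Require Import structures.
From mathcomp Require Import all_boot.
From mathcomp Require Import boolp classical_sets topology.
Set Implicit Arguments. Unset Strict Implicit. Unset Printing Implicit Defensive.
Local Open Scope classical_set_scope.

Definition is_group {G : Type} (mul : G -> G -> G) (inv : G -> G) (e : G) :=
  [/\ forall x y z, mul x (mul y z) = mul (mul x y) z,
      forall x, mul e x = x /\ mul x e = x &
      forall x, mul (inv x) x = e /\ mul x (inv x) = e].

Definition is_topological_group {G : topologicalType}
  (mul : G -> G -> G) (inv : G -> G) (e : G) :=
  [/\ is_group mul inv e,
      continuous (fun p : G * G => mul p.1 p.2) & continuous inv].

Definition is_involutive_automorphism {G : topologicalType}
  (mul : G -> G -> G) (theta : G -> G) :=
  [/\ forall x y, theta (mul x y) = mul (theta x) (theta y),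
      continuous theta & forall x, theta (theta x) = x].

Inductive gen_subgroup {G : Type} (mul : G -> G -> G) (inv : G -> G) (e : G)
    (S : set G) : set G :=
  | gsg_one : gen_subgroup mul inv e S e
  | gsg_gen x : S x -> gen_subgroup mul inv e S x
  | gsg_mul x y : gen_subgroup mul inv e S x -> gen_subgroup mul inv e S y ->
      gen_subgroup mul inv e S (mul x y)
  | gsg_inv x : gen_subgroup mul inv e S x -> gen_subgroup mul inv e S (inv x).

Definition is_reflection_space {X : topologicalType} (dot : X -> X -> X) :=
  [/\ continuous (fun p : X * X => dot p.1 p.2),
      forall x, dot x x = x,
      forall x y, dot x (dot x y) = y &
      forall x y z, dot x (dot y z) = dot (dot x y) (dot x z)].

Definition is_inverse {X : Type} (f g : X -> X) :=
  (forall x, g (f x) = x) /\ (forall x, f (g x) = x).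

Inductive gen_group_maps {X : Type} (S : set (X -> X)) : set (X -> X) :=
  | ggm_id : gen_group_maps S id
  | ggm_gen f : S f -> gen_group_maps S f
  | ggm_comp f g : gen_group_maps S f -> gen_group_maps S g ->
      gen_group_maps S (f \o g)
  | ggm_inv f g : gen_group_maps S f -> is_inverse f g -> gen_group_maps S g.

(* The pointed reflection space (X, dot, o) contains (G/K, eK) with K = G^theta:
   pi : G -> X is the map g |-> gK, it identifies exactly the cosets of K,
   intertwines the reflection (gK,hK) |-> tau(g) theta(h) K, sends e to o,
   and G/K carries the subspace topology of X which equals the quotient
   topology induced by pi. *)
Definition contains_homogeneous_space {G X : topologicalType}
  (mul : G -> G -> G) (inv : G -> G) (e : G) (theta : G -> G)
  (dot : X -> X -> X) (o : X) (pi : G -> X) :=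
  [/\ forall g h, pi g = pi h <-> theta (mul (inv g) h) = mul (inv g) h,
      forall g h, dot (pi g) (pi h) = pi (mul (mul g (inv (theta g))) (theta h)),
      pi e = o &
      forall A : set X, A `<=` range pi ->
        ((exists U : set X, open U /\ A = U `&` range pi) <-> open (pi @^-1` A))].

(* Trans(X)|_{G/K} = < s_y o s_o | y in G/K >. *)
Definition restricted_trans {G X : Type} (dot : X -> X -> X) (o : X)
  (pi : G -> X) : set (X -> X) :=
  gen_group_maps [set f | exists h : G, f = dot (pi h) \o dot o].

(* Only the algebra matters. Put
   Q h := s_{hK} ∘ s_o, so that Trans(X)|_{G/K} is generated by the Q h, and
   let H be the group generated by the T_i and s_o T_i^{-1} s_o. Since each
   transvection T is an automorphism of the reflection, s_{T x} = T s_x T^{-1},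
   hence Q (g_i h) = T_i ∘ Q h ∘ (s_o T_i^{-1} s_o). Thus the set of k with
   Q h ∈ H <-> Q (k h) ∈ H for all h is a subgroup of G containing the g_i,
   i.e. all of G, and Q e = id gives Q h ∈ H. Conversely each generator of H
   lies in Trans(X)|_{G/K}, which is stable under conjugation by s_o because
   s_o (s_y s_o) s_o = (s_y s_o)^{-1}. *)
From HB Require Import structures.
From mathcomp Require Import all_boot.
From mathcomp Require Import boolp classical_sets topology.
Set Implicit Arguments.
Unset Strict Implicit.
Local Open Scope classical_set_scope.

Section GenSubgroup.
Variables (G : Type) (mul : G -> G -> G) (inv : G -> G) (e : G).

Lemma gen_subgroup_min (S A : set G) :
  A e -> (forall x y, A x -> A y -> A (mul x y)) ->
  (forall x, A x -> A (inv x)) -> S `<=` A ->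
  gen_subgroup mul inv e S `<=` A.
Proof.
move=> Ae AM AV SA x; elim=> {x} [//|x /SA //|x y _ Ax _ Ay|x _ Ax].
- exact: AM.
- exact: AV.
Qed.

Lemma gen_subgroup_translation_invariant (S P : set G) :
  is_group mul inv e ->
  (forall s h, S s -> P h <-> P (mul s h)) ->
  forall k, gen_subgroup mul inv e S k -> forall h, P h <-> P (mul k h).
Proof.
move=> [mulA mul1 mulV] SP.
apply: gen_subgroup_min => [h|x y Px Py h|x Px h|s Ss h].
- by rewrite (proj1 (mul1 h)).
- by rewrite -mulA -Px.
- by rewrite (Px (mul (inv x) h)) mulA (proj2 (mulV x)) (proj1 (mul1 h)).
- exact: SP.
Qed.

End GenSubgroup.

Section GenGroupMaps.
Variable X : Type.

Lemma gen_group_maps_min (S S' : set (X -> X)) :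
  S `<=` gen_group_maps S' -> gen_group_maps S `<=` gen_group_maps S'.
Proof.
move=> SS' f; elim=> {f} [|f /SS' //|f g _ Hf _ Hg|f g _ Hf fg].
- exact: ggm_id.
- exact: ggm_comp.
- exact: ggm_inv fg.
Qed.

Lemma gen_group_maps_inverse (S : set (X -> X)) :
  (forall f, S f -> exists g, is_inverse f g) ->
  forall f, gen_group_maps S f -> exists g, is_inverse f g.
Proof.
move=> Sinv f; elim=> {f} [|f /Sinv //|f g _ [fi [fK fiK]] _ [gi [gK giK]]|].
- by exists id.
- by exists (gi \o fi); split=> x /=; rewrite ?fK ?gK ?giK ?fiK.
- by move=> f g _ _ [fK gK]; exists f.
Qed.

Lemma morph_inverse (op : X -> X -> X) (f g : X -> X) :
  {morph f : x y / op x y} -> is_inverse f g -> {morph g : x y / op x y}.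
Proof. by move=> fM [fK gK] x y; rewrite -{1}(gK x) -{1}(gK y) -fM fK. Qed.

Lemma gen_group_maps_morph (op : X -> X -> X) (S : set (X -> X)) :
  (forall f, S f -> {morph f : x y / op x y}) ->
  forall f, gen_group_maps S f -> {morph f : x y / op x y}.
Proof.
move=> SM f; elim=> {f} [//|f /SM //|f g _ fM _ gM x y /=|f g _ fM fg].
- by rewrite gM fM.
- exact: morph_inverse fM fg.
Qed.

Lemma gen_group_maps_conj (s : X -> X) (S : set (X -> X)) :
  involutive s -> (forall f, S f -> gen_group_maps S (s \o f \o s)) ->
  forall f, gen_group_maps S f -> gen_group_maps S (s \o f \o s).
Proof.
move=> sK Sconj f; elim=> {f} [|f /Sconj //|f g _ Hf _ Hg|f g _ Hf [fK gK]].
- have -> : s \o id \o s = id by apply: funext => x /=; rewrite sK.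
  exact: ggm_id.
- have -> : s \o (f \o g) \o s = (s \o f \o s) \o (s \o g \o s).
    by apply: funext => x /=; rewrite sK.
  exact: ggm_comp.
- by apply: (ggm_inv Hf); split=> x /=; rewrite sK ?fK ?gK sK.
Qed.

End GenGroupMaps.

Section Transvections.
Variables (X : Type) (dot : X -> X -> X).
Hypothesis dotK : forall x, involutive (dot x).
Hypothesis dotD : forall x, {morph dot x : y z / dot y z}.

Lemma transvection_morph x o : {morph dot x \o dot o : y z / dot y z}.
Proof. by move=> y z /=; rewrite (dotD o) (dotD x). Qed.

Lemma transvection_inverse x o : is_inverse (dot x \o dot o) (dot o \o dot x).
Proof. by split=> y /=; rewrite !dotK. Qed.

Lemma transvection_translate (f g : X -> X) o x :
  {morph f : y z / dot y z} -> cancel g f ->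
  dot (f x) \o dot o = f \o (dot x \o dot o) \o (dot o \o g \o dot o).
Proof. by move=> fM gK; apply: funext => y /=; rewrite dotK fM gK. Qed.

Lemma gen_group_maps_transvection_translate (S : set (X -> X)) (f g : X -> X)
    o x :
  {morph f : y z / dot y z} -> is_inverse f g ->
  gen_group_maps S f -> gen_group_maps S (dot o \o g \o dot o) ->
  gen_group_maps S (dot x \o dot o) <-> gen_group_maps S (dot (f x) \o dot o).
Proof.
move=> fM [fK gK] Sf Sg; have Sg' := ggm_inv Sf (conj fK gK).
have Sf' : gen_group_maps S (dot o \o f \o dot o).
  by apply: (ggm_inv Sg); split=> y /=; rewrite dotK ?fK ?gK dotK.
split=> Sx.
- rewrite (transvection_translate o x fM gK).
  exact: ggm_comp (ggm_comp Sf Sx) Sg.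
- have gM := morph_inverse fM (conj fK gK).
  rewrite -{1}[x]fK (transvection_translate o (f x) gM fK).
  exact: ggm_comp (ggm_comp Sg' Sx) Sf'.
Qed.

Variables (G : Type) (pi : G -> X) (o : X).

Lemma restricted_trans_morph f :
  restricted_trans dot o pi f -> {morph f : y z / dot y z}.
Proof.
by apply: gen_group_maps_morph => _ [h ->]; apply: transvection_morph.
Qed.

Lemma restricted_trans_inverse f :
  restricted_trans dot o pi f -> exists g, is_inverse f g.
Proof.
apply: gen_group_maps_inverse => _ [h ->].
by exists (dot o \o dot (pi h)); apply: transvection_inverse.
Qed.

Lemma restricted_trans_conj f :
  restricted_trans dot o pi f ->
  restricted_trans dot o pi (dot o \o f \o dot o).
Proof.
apply: gen_group_maps_conj => // _ [h ->].
apply: (@ggm_inv _ _ (dot (pi h) \o dot o)); first by apply: ggm_gen; exists h.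
by split=> y /=; rewrite !dotK.
Qed.

End Transvections.

Theorem proposition4p1
  (G : topologicalType) (mul : G -> G -> G) (inv : G -> G) (e : G)
  (theta : G -> G)
  (X : topologicalType) (dot : X -> X -> X) (o : X) (pi : G -> X)
  (I : Type) (g : I -> G) (T : I -> X -> X) :
  is_topological_group mul inv e ->
  is_involutive_automorphism mul theta ->
  is_reflection_space dot ->
  contains_homogeneous_space mul inv e theta dot o pi ->
  gen_subgroup mul inv e (range g) = setT ->
  (forall i, restricted_trans dot o pi (T i)) ->
  (forall i h, T i (pi h) = pi (mul (g i) h)) ->
  gen_group_maps
    ([set f | exists i, f = T i] `|`
     [set f | exists i Tinv, is_inverse (T i) Tinv /\ f = dot o \o Tinv \o dot o])
  = restricted_trans dot o pi.
Proof.
move=> [Ggroup _ _] _ [_ _ dotK dotD] [_ _ pi_e _] gen_g T_trans T_pi.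
set H := gen_group_maps _.
pose Q h := dot (pi h) \o dot o.
have Q_translate i h : H (Q h) <-> H (Q (mul (g i) h)).
  have [Ti Ti_inv] := restricted_trans_inverse dotK (T_trans i).
  have T_morph := restricted_trans_morph dotD (T_trans i).
  rewrite /Q -T_pi.
  apply: (gen_group_maps_transvection_translate dotK (pi h) T_morph Ti_inv).
  - by apply/ggm_gen; left; exists i.
  - by apply/ggm_gen; right; exists i, Ti.
have Q_invariant k h : H (Q h) <-> H (Q (mul k h)).
  apply: (gen_subgroup_translation_invariant (S := range g) (P := H \o Q)
           Ggroup).
  - by move=> _ h' [i _ <-]; apply: Q_translate.
  - by rewrite gen_g.
have Q_e : Q e = id by apply: funext => x; rewrite /Q /= pi_e dotK.
have H_Q h : H (Q h).
  have [_ mul1 _] := Ggroup; rewrite -[h](proj2 (mul1 h)).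
  by apply/(Q_invariant h e); rewrite Q_e; apply: ggm_id.
apply/seteqP; split; apply: gen_group_maps_min => f.
- case=> [[i ->]|[i [Ti [Ti_inv ->]]]]; first exact: T_trans.
  exact/(restricted_trans_conj dotK)/(ggm_inv (T_trans i) Ti_inv).
- by case=> h ->; apply: H_Q.
Qed.
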